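(* Let $G^*=(V,E^* )$ be the true causal DAG and let $G=(V,E)$ be a superstructure for $G^*$. Let $\{S_1,\dots,S_N\}$ be a vertex-covering partition of $V$ (i.e. $\bigcup_i S_i=V$). Then its causal expansion $\{S'_1,\dots,S'_N\}$, where $S'_i=S_i\cup\partial_{\mathrm{out}}(S_i)$, is a causal partition with respect to $G$ and $G^*$.
   Context: Superstructure: an undirected graph $G=(V,E)$ such that every pair of vertices adjacent in $G^*$ is adjacent in $G$. Outer vertex boundary: $\partial_{\mathrm{out}}(S)=\{v\in V\setminus S:\exists u\in S\text{ with } u,v \text{ adjacent in } G\}$. Setting: random variables correspond to the vertices of $G^*$, their joint distribution $P$ factorizes according to $G^*$ and is faithful to it; $X_S$ is the (infinite-sample) data on $S\subseteq V$. A collider on a path is a non-endpoint vertex whose two incident path edges both have an arrowhead at it. For $L\subset V$, an inducing path relative to $L$ between $u$ and $v$ in $G^*$ is a path $(u,q_1,\dots,q_k,v)$ in which every non-endpoint vertex lying in $V\setminus L$ is a collider on the path and an ancestor in $G^*$ of $u$ or $v$. A MAG is a mixed graph (directed and bi-directed edges) with no directed or almost directed cycles and no inducing path between non-adjacent vertices; its Markov equivalence class $[M]$ consists of MAGs with the same $m$-separations, and $PAG[M]$ has the same adjacencies as $M$ with arrowhead/tail marks where shared by all of $[M]$ and circle marks otherwise. The latent MAG $L^{\mathrm{MAG}}(G^*,S)$ on $S$ has $u,v\in S$ adjacent iff there is an inducing path relative to $V\setminus S$ between them in $G^*$, oriented $u\to v$ if $u$ is an ancestor of $v$ in $G^*$,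 $v\to u$ if $v$ is an ancestor of $u$, and $u\leftrightarrow v$ otherwise. Consistent PAG Learner Assumption: $\mathscr{A}$ is a structure learner such that for every $S\subseteq V$, when $P$ is faithful, in the infinite data limit $\mathscr{A}(X_S)=PAG[L^{\mathrm{MAG}}(G^*,S)]$. Causal partition: an overlapping family $\{S'_1,\dots,S'_N\}$ of subsets of $V$ is causal with respect to $G$ and $G^*$ if, for any learner $\mathscr{A}$ satisfying the assumption above: (i) for every edge $\{u,v\}$ of $G$ some $S'_i\supseteq\{u,v\}$; (ii) for any $u,v$ non-adjacent in $G^*$ but adjacent in $G$, there is some $S'_i$ with $u,v\in S'_i$ such that $\mathscr{A}(X_{S'_i})$ has no edge between $u$ and $v$; (iii) for any unshielded collider $u\to v\leftarrow w$ in $G^*$ ($u,w$ non-adjacent) there is some $S'_i$ with $\{u,v,w\}\subseteq S'_i$. *)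

From mathcomp Require Import all_boot.
From Stdlib Require Import ClassicalDescription.

Set Implicit Arguments.
Unset Strict Implicit.
Unset Printing Implicit Defensive.

Section CausalDefs.
Variable V : finType.

(* g (u,v) = None        : u and v are not adjacent                    *)
(* g (u,v) = Some (a,b)  : there is an edge between u and v, with      *)
(*                         mark a at u and mark b at v.                *)
(* A directed edge u -> v is Some (Tail, Arrow); u <-> v is            *)
(* Some (Arrow, Arrow).  PAGs additionally use Circle marks.           *)
Inductive mark := Tail | Arrow | Circle.

Definition mgraph := {ffun V * V -> option (mark * mark)}.

Definition madj (M : mgraph) (u v : V) : bool :=
  if M (u, v) is Some _ then true else false.
Definition marr (M : mgraph) (a x : V) : bool :=
  if M (a, x) is Some (_, Arrow) then true else false.
Definition mdir (M : mgraph) (u v : V) : bool :=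
  if M (u, v) is Some (Tail, Arrow) then true else false.
Definition mbidir (M : mgraph) (u v : V) : bool :=
  if M (u, v) is Some (Arrow, Arrow) then true else false.
Definition manc (M : mgraph) : rel V := connect (mdir M).

(* positions 1 .. size q.                                              *)
Definition is_path (adj : rel V) (u v : V) (q : seq V) : Prop :=
  path adj u (rcons q v) /\ uniq (u :: rcons q v).

Definition inducing_path (adj : rel V) (arr : V -> V -> bool) (anc : rel V)
    (L : {set V}) (u v : V) (q : seq V) : Prop :=
  is_path adj u v q /\
  forall j, 0 < j <= size q ->
    let p := u :: rcons q v in
    let x := nth u p j in
    x \notin L ->
      [/\ arr (nth u p j.-1) x, arr (nth u p j.+1) x & anc x u || anc x v].

Definition is_MAG (S : {set V}) (M : mgraph) : Prop :=
  (forall u v, M (v, u) = omap (fun p => (p.2, p.1)) (M (u, v))) /\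
  (forall u, M (u, u) = None) /\
  [/\
      (forall u v, M (u, v) <> None -> u \in S /\ v \in S),
      (forall u v, M (u, v) = None \/ M (u, v) = Some (Tail, Arrow) \/
                   M (u, v) = Some (Arrow, Tail) \/ M (u, v) = Some (Arrow, Arrow)),
      (forall u v, mdir M u v -> ~~ manc M v u),
      (forall u v, mbidir M u v -> ~~ manc M u v)
    &
      (forall u v q, u != v -> M (u, v) = None ->
         ~ inducing_path (madj M) (marr M) (manc M) set0 u v q)].

Definition m_connecting (M : mgraph) (Z : {set V}) (u v : V) (q : seq V) : Prop :=
  is_path (madj M) u v q /\
  forall j, 0 < j <= size q ->
    let p := u :: rcons q v in
    let x := nth u p j in
    if marr M (nth u p j.-1) x && marr M (nth u p j.+1) x
    then (exists2 z, z \in Z & manc M x z)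
    else x \notin Z.

Definition m_separated (M : mgraph) (u v : V) (Z : {set V}) : Prop :=
  ~ exists q, m_connecting M Z u v q.

Definition in_markov_class (S : {set V}) (M M' : mgraph) : Prop :=
  is_MAG S M' /\
  forall u v (Z : {set V}), u \in S -> v \in S -> u != v ->
    Z \subset S :\ u :\ v ->
    (m_separated M u v Z <-> m_separated M' u v Z).

(* PAG[M]: mark at v of the edge u-v *)
Definition pag_mark (S : {set V}) (M : mgraph) (u v : V) : mark :=
  if excluded_middle_informative
       (forall M', in_markov_class S M M' -> exists a, M' (u, v) = Some (a, Arrow))
  then Arrow
  else if excluded_middle_informative
       (forall M', in_markov_class S M M' -> exists a, M' (u, v) = Some (a, Tail))
  then Tail
  else Circle.

Definition PAG (S : {set V}) (M : mgraph) : mgraph :=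
  [ffun p : V * V =>
     if M p is Some _ then Some (pag_mark S M p.2 p.1, pag_mark S M p.1 p.2)
     else None].

Definition is_DAG (dE : rel V) : Prop :=
  forall u v, dE u v -> ~~ connect dE v u.

Definition dadj (dE : rel V) (u v : V) : bool := dE u v || dE v u.

Definition latent_MAG (dE : rel V) (S : {set V}) : mgraph :=
  [ffun p : V * V =>
     if excluded_middle_informative
          (p.1 \in S /\ p.2 \in S /\
           exists q, inducing_path (dadj dE) dE (connect dE) (~: S) p.1 p.2 q)
     then (if connect dE p.1 p.2 then Some (Tail, Arrow)
           else if connect dE p.2 p.1 then Some (Arrow, Tail)
           else Some (Arrow, Arrow))
     else None].

(* Consistent PAG learner (infinite-data limit): the output on the data
   X_S is PAG[L^MAG(G*, S)] for every S. *)
Definition consistent_PAG_learner (dE : rel V) (A : {set V} -> mgraph) : Prop :=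
  forall S : {set V}, A S = PAG S (latent_MAG dE S).

Definition superstructure (e : rel V) (dE : rel V) : Prop :=
  (forall u v, e u v = e v u) /\ (forall u v, dE u v -> e u v).

Definition out_boundary (e : rel V) (A : {set V}) : {set V} :=
  [set v | (v \notin A) && [exists u in A, e u v]].

Definition causal_partition (e dE : rel V) (N : nat) (Sp : 'I_N -> {set V}) : Prop :=
  forall A : {set V} -> mgraph, consistent_PAG_learner dE A ->
  [/\
      (forall u v, e u v -> exists i, (u \in Sp i) && (v \in Sp i)),
      (forall u v, ~~ dadj dE u v -> e u v ->
         exists i, [/\ u \in Sp i, v \in Sp i & A (Sp i) (u, v) = None])
    &
      (forall u v w, dE u v -> dE w v -> ~~ dadj dE u w ->
         exists i, [/\ u \in Sp i, v \in Sp i & w \in Sp i])].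

End CausalDefs.

(** Conditions (i) and (iii) hold because the expansion of a block containing
    a vertex contains all its [G]-neighbours, hence all its [G*]-neighbours.
    For (ii), take non-adjacent [u], [v] with a [G]-edge and a block [S i]
    containing [u]; all [G*]-neighbours of [u] are observed in its expansion.
    If the learner kept the edge [u - v] there, an inducing path would join
    them, and its first interior vertex [x] would be observed, hence a
    collider and an ancestor of [u] or [v]; as [u -> x], it is an ancestor of
    [v].  Doing the same from a block containing [v] makes [v] a proper
    ancestor of [u], a directed cycle. *)

From mathcomp Require Import all_boot zify.
From Stdlib Require Import ClassicalDescription.

Set Implicit Arguments.
Unset Strict Implicit.
Unset Printing Implicit Defensive.

Section InducingPaths.
Variables (V : finType) (adj : rel V) (arr : V -> V -> bool) (anc : rel V).
Hypothesis adj_sym : symmetric adj.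

Lemma is_path_rev u v q : is_path adj u v q -> is_path adj v u (rev q).
Proof.
have rev_p : rev (u :: rcons q v) = v :: rcons (rev q) u.
  by rewrite rev_cons rev_rcons.
case=> p_path p_uniq; split; last by rewrite -rev_p rev_uniq.
have := rev_sorted adj (u :: rcons q v); rewrite rev_p /= => ->.
by rewrite (eq_path (e' := adj)) // => x y; rewrite adj_sym.
Qed.

Lemma inducing_path_rev L u v q :
  inducing_path adj arr anc L u v q -> inducing_path adj arr anc L v u (rev q).
Proof.
case=> p_path colliders; split; first exact: is_path_rev.
set p := u :: rcons q v; have rev_p : rev p = v :: rcons (rev q) u.
  by rewrite rev_cons rev_rcons.
have size_p : size p = (size q).+2 by rewrite /= size_rcons.
move=> j /andP[j_gt0 j_le]; rewrite -rev_p size_rev in j_le *; cbv zeta.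
have nth_revp k : k < size p -> nth v (rev p) k = nth u p ((size q).+1 - k).
  by move=> lt_k; rewrite nth_rev // size_p subSS (set_nth_default u) //; lia.
rewrite !nth_revp; try lia.
have -> : (size q).+1 - j.-1 = ((size q).+1 - j).+1 by lia.
have -> : (size q).+1 - j.+1 = ((size q).+1 - j).-1 by lia.
move=> xL; have [|arr_l arr_r anc_x] := colliders ((size q).+1 - j) _ xL.
  by lia.
by split; rewrite // orbC.
Qed.

End InducingPaths.

Lemma dadj_sym (V : finType) (dE : rel V) : symmetric (dadj dE).
Proof. by move=> u v; rewrite /dadj orbC. Qed.

Lemma inducing_path_proper_ancestor (V : finType) (dE : rel V) (L : {set V}) u v q :
    is_DAG dE -> ~~ dadj dE u v -> (forall x, dadj dE u x -> x \notin L) ->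
    inducing_path (dadj dE) dE (connect dE) L u v q ->
  exists2 x, dE u x & connect dE x v.
Proof.
move=> dag nadj_uv observed [[p_path _] colliders].
case: q p_path colliders => [|x q] /= /andP[adj_ux _] colliders.
  by rewrite adj_ux in nadj_uv.
have [dE_ux _ /orP[anc_xu|anc_xv]] := colliders 1 isT (observed _ adj_ux).
  by have := dag _ _ dE_ux; rewrite anc_xu.
by exists x.
Qed.

Lemma learner_edge_inducing_path (V : finType) (dE : rel V) A (S : {set V}) u v :
    consistent_PAG_learner dE A -> A S (u, v) <> None ->
  exists q, inducing_path (dadj dE) dE (connect dE) (~: S) u v q.
Proof.
move=> learner; rewrite learner !ffunE /=.
case: excluded_middle_informative => [in_S|//] _.
by case: in_S => _ [].
Qed.

Definition causal_expansion (V : finType) (e : rel V) (T : {set V}) :=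
  T :|: out_boundary e T.

Lemma mem_causal_expansion (V : finType) (e : rel V) (T : {set V}) u :
  u \in T -> u \in causal_expansion e T.
Proof. by move=> uT; rewrite in_setU uT. Qed.

Lemma causal_expansion_adj (V : finType) (e : rel V) (T : {set V}) u x :
  u \in T -> e u x -> x \in causal_expansion e T.
Proof.
move=> uT e_ux; rewrite !inE; case: (x \in T) => //=.
by apply/existsP; exists u; rewrite uT.
Qed.

Lemma superstructure_dadj (V : finType) (e dE : rel V) u v :
  superstructure e dE -> dadj dE u v -> e u v.
Proof. by case=> e_sym dE_e /orP[] /dE_e //; rewrite e_sym. Qed.

Section CausalExpansion.
Variables (V : finType) (dE e : rel V) (N : nat) (S : 'I_N -> {set V}).
Hypothesis dag : is_DAG dE.
Hypothesis super : superstructure e dE.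
Hypothesis cover : \bigcup_(i < N) S i = [set: V].

Lemma exists_block x : exists i, x \in S i.
Proof.
have : x \in \bigcup_(i < N) S i by rewrite cover inE.
by case/bigcupP=> i _; exists i.
Qed.

Lemma expansion_covers_edges u v :
    e u v ->
  exists i, (u \in causal_expansion e (S i)) && (v \in causal_expansion e (S i)).
Proof.
move=> e_uv; have [i uSi] := exists_block u; exists i.
by rewrite mem_causal_expansion //= (causal_expansion_adj uSi).
Qed.

Lemma expansion_covers_colliders u v w :
    dE u v -> dE w v ->
  exists i, [/\ u \in causal_expansion e (S i), v \in causal_expansion e (S i)
              & w \in causal_expansion e (S i)].
Proof.
move=> dE_uv dE_wv; have [e_sym dE_e] := super.
have [i vSi] := exists_block v; exists i.
split; [|exact: mem_causal_expansion|];
  by apply: (causal_expansion_adj vSi); rewrite e_sym dE_e.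
Qed.

Lemma expansion_inducing_path_ancestor i u v q :
    u \in S i -> ~~ dadj dE u v ->
    inducing_path (dadj dE) dE (connect dE) (~: causal_expansion e (S i)) u v q ->
  exists2 x, dE u x & connect dE x v.
Proof.
move=> uSi nadj_uv; apply: inducing_path_proper_ancestor => // x adj_ux.
by rewrite inE negbK (causal_expansion_adj uSi) // (superstructure_dadj super).
Qed.

Lemma expansion_removes_nonedges A u v :
    consistent_PAG_learner dE A -> ~~ dadj dE u v -> e u v ->
  exists i, [/\ u \in causal_expansion e (S i), v \in causal_expansion e (S i)
              & A (causal_expansion e (S i)) (u, v) = None].
Proof.
move=> learner nadj_uv e_uv.
have [i uSi] := exists_block u; have [j vSj] := exists_block v.
case Ai: (A (causal_expansion e (S i)) (u, v)) => [m|]; last first.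
  by exists i; rewrite mem_causal_expansion // (causal_expansion_adj uSi).
case Aj: (A (causal_expansion e (S j)) (u, v)) => [m'|]; last first.
  exists j; split=> //; last exact: mem_causal_expansion.
  by apply: (causal_expansion_adj vSj); rewrite super.1.
have /(learner_edge_inducing_path learner) [q ind_q] :
  A (causal_expansion e (S i)) (u, v) <> None by rewrite Ai.
have /(learner_edge_inducing_path learner) [r ind_r] :
  A (causal_expansion e (S j)) (u, v) <> None by rewrite Aj.
have [x dE_ux anc_xv] := expansion_inducing_path_ancestor uSi nadj_uv ind_q.
have nadj_vu : ~~ dadj dE v u by rewrite dadj_sym.
have [y dE_vy anc_yu] := expansion_inducing_path_ancestor vSj nadj_vu
  (inducing_path_rev (@dadj_sym _ dE) ind_r).
have anc_xu : connect dE x u.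
  exact: connect_trans anc_xv (connect_trans (connect1 dE_vy) anc_yu).
by have := dag dE_ux; rewrite anc_xu.
Qed.

End CausalExpansion.

Theorem lemma2 (V : finType) (dE e : rel V) (N : nat) (S : 'I_N -> {set V}) :
  is_DAG dE ->
  superstructure e dE ->
  \bigcup_(i < N) S i = [set: V] ->
  causal_partition e dE (fun i => S i :|: out_boundary e (S i)).
Proof.
move=> dag super cover A learner; split.
- exact: expansion_covers_edges cover.
- by move=> u v nadj_uv e_uv; apply: expansion_removes_nonedges nadj_uv e_uv.
- by move=> u v w dE_uv dE_wv _; apply: expansion_covers_colliders dE_uv dE_wv.
Qed.
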